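(* Let $J\subsetneq I$ be nonzero square free monomial ideals of $S=K[x_1,\ldots,x_n]$, where $I$ is generated by $r>0$ variables and $J$ is generated by square free monomials of degrees $\geq 2$. Let $s=\rho_2(I)-\rho_2(J)$ be the number of square free monomials of degree $2$ in $I\setminus J$. If $r>s$, then $\operatorname{depth}_S I/J=1$.
   Context: $S=K[x_1,\ldots,x_n]$ is the polynomial ring over a field $K$; for a monomial ideal $L$, $\rho_k(L)$ denotes the number of square free monomials of degree $k$ belonging to $L$; depth is taken over $S$. *)

From HB Require Import structures.
From mathcomp Require Import all_boot all_order all_algebra.
From Stdlib Require Import ClassicalEpsilon.
Set Implicit Arguments. Unset Strict Implicit. Unset Printing Implicit Defensive.
Import GRing.Theory.
Local Open Scope ring_scope.

Fixpoint mpoly (R : comNzRingType) (n : nat) : comNzRingType :=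
  match n with 0 => R | n'.+1 => {poly (mpoly R n')} end.

(* variable number i (for i < n); x_0 is the outermost 'X *)
Fixpoint xv (R : comNzRingType) (n : nat) (i : nat) : mpoly R n :=
  match n return mpoly R n with
  | 0 => 1
  | n'.+1 => match i with 0 => 'X | i'.+1 => (xv R n' i')%:P end
  end.

Definition var (R : comNzRingType) (n : nat) (i : 'I_n) : mpoly R n := xv R n i.

Definition sqmon (R : comNzRingType) (n : nat) (A : {set 'I_n}) : mpoly R n :=
  \prod_(i in A) @var R n i.

Definition ideal_gen (S : comNzRingType) (G : S -> Prop) : S -> Prop :=
  fun f => exists s : seq (S * S),
    (forall p, p \in s -> G p.2) /\ f = \sum_(p <- s) p.1 * p.2.

Definition sqfree_ideal (R : comNzRingType) (n : nat) (F : {set {set 'I_n}}) :=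
  ideal_gen (fun f : mpoly R n => exists A, A \in F /\ f = @sqmon R n A).

Definition var_ideal (R : comNzRingType) (n : nat) (V : {set 'I_n}) :=
  ideal_gen (fun f : mpoly R n => exists i, i \in V /\ f = @var R n i).

Definition max_ideal (R : comNzRingType) (n : nat) :=
  ideal_gen (fun f : mpoly R n => exists i, f = @var R n i).

Definition pb (P : Prop) : bool :=
  if excluded_middle_informative P then true else false.

Definition rho (R : comNzRingType) (n k : nat) (L : mpoly R n -> Prop) : nat :=
  #|[set A : {set 'I_n} | (#|A| == k) && pb (L (@sqmon R n A))]|.

(* For M = I/J and fs = f_1..f_k: the preimage in I of (f_1,..,f_k)M, i.e. the
   submodule J + (f_1,...,f_k) I of I (membership tested for elements of I). *)
Definition sub_fM (S : comNzRingType) (I J : S -> Prop) (fs : seq S) : S -> Prop :=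
  ideal_gen (fun g => J g \/ exists f v, f \in fs /\ I v /\ g = f * v).

Definition quot_regular (R : comNzRingType) (n : nat) (I J : mpoly R n -> Prop)
    (fs : seq (mpoly R n)) : Prop :=
  [/\ (forall f, f \in fs -> @max_ideal R n f),
      (forall k, (k < size fs)%N -> forall u, I u ->
         sub_fM I J (take k fs) (nth 0 fs k * u) -> sub_fM I J (take k fs) u)
    & (exists u, I u /\ ~ sub_fM I J fs u)].

Definition depth_ge (R : comNzRingType) (n : nat) (I J : mpoly R n -> Prop) (d : nat) :=
  exists fs, size fs = d /\ quot_regular I J fs.

Definition depth_eq (R : comNzRingType) (n : nat) (I J : mpoly R n -> Prop) (d : nat) :=
  depth_ge I J d /\ ~ depth_ge I J d.+1.

From HB Require Import structures.
From mathcomp Require Import all_boot all_order all_algebra ring.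
From Stdlib Require Import Classical ClassicalEpsilon.
Set Implicit Arguments. Unset Strict Implicit. Unset Printing Implicit Defensive.
Import GRing.Theory.
Local Open Scope ring_scope.

(* - depth >= 1: the sum of all variables g is I/J-regular, because a squarefree
     ideal J generated in degrees >= 2 satisfies J : g = J on elements of I
     (proved by induction on n through the coefficients in the first variable);
     and x_v is not in J + gI, as seen after collapsing every variable to a
     single one X: the image of J + gI is divisible by X^2.
   - depth < 2: call a nonempty C included in V a cut of J when x_w x_b is in J
     for all w in C and b outside C.  A counting argument shows that if J has no
     cut then the squarefree quadrics of I outside J are at least r in number,
     i.e. s >= r.  Given a cut C, splitting every linear form f = a + (f - a)
     along C shows that no sequence f1, f2 of the maximal ideal can be regular,
     since some x_w (w in C) would again lie in J + x_w I. *)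

Section IdealGeneration.
Variable S : comNzRingType.
Implicit Types G H : S -> Prop.

Lemma idealg0 G : ideal_gen G 0.
Proof. by exists [::]; rewrite big_nil. Qed.

Lemma idealgD G x y : ideal_gen G x -> ideal_gen G y -> ideal_gen G (x + y).
Proof.
move=> [s [Hs ->]] [t [Ht ->]]; exists (s ++ t); split; last by rewrite big_cat.
by move=> p; rewrite mem_cat => /orP [] ?; [apply: Hs | apply: Ht].
Qed.

Lemma idealgM G a x : ideal_gen G x -> ideal_gen G (a * x).
Proof.
move=> [s [Hs ->]]; exists [seq (a * p.1, p.2) | p <- s]; split.
  by move=> p /mapP [q qs ->] /=; apply: Hs.
by rewrite big_map big_distrr /=; apply: eq_bigr => p _; rewrite mulrA.
Qed.

Lemma idealg_gen G g : G g -> ideal_gen G g.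
Proof.
move=> Gg; exists [:: (1, g)]; split; first by move=> p; rewrite inE => /eqP ->.
by rewrite big_seq1 mul1r.
Qed.

Lemma idealgN G x : ideal_gen G x -> ideal_gen G (- x).
Proof. by move=> Gx; rewrite -mulN1r; apply: idealgM. Qed.

Lemma idealgB G x y : ideal_gen G x -> ideal_gen G y -> ideal_gen G (x - y).
Proof. by move=> Gx Gy; apply: idealgD => //; apply: idealgN. Qed.

Lemma idealg_ind G (P : S -> Prop) : P 0 -> (forall x y, P x -> P y -> P (x + y)) ->
  (forall a x, P x -> P (a * x)) -> (forall g, G g -> P g) ->
  forall x, ideal_gen G x -> P x.
Proof.
move=> P0 PD PM PG x [s [Hs ->]]; elim: s Hs => [|p s IH] Hs; first by rewrite big_nil.
rewrite big_cons; apply: PD; last by apply: IH => q qs; apply: Hs; rewrite inE qs orbT.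
by apply: PM; apply: PG; apply: Hs; rewrite mem_head.
Qed.

Lemma idealg_sub G H x :
  (forall g, G g -> ideal_gen H g) -> ideal_gen G x -> ideal_gen H x.
Proof. by move=> GH; apply: idealg_ind => //; [exact: idealg0 | exact: idealgD | exact: idealgM]. Qed.

Lemma idealg_sum G (T : Type) (r : seq T) (P : pred T) (F : T -> S) :
  (forall i, P i -> ideal_gen G (F i)) -> ideal_gen G (\sum_(i <- r | P i) F i).
Proof.
move=> HF; elim/big_rec: _ => [|i x Pi Hx]; first exact: idealg0.
by apply: idealgD => //; apply: HF.
Qed.

Lemma idealg_coef_descent G (g : S) (p : {poly S}) :
  (forall k, ideal_gen G (p`_k + g * p`_k.+1)) -> forall k, ideal_gen G p`_k.
Proof.
move=> Hp; suff Hm m k : (size p <= k + m)%N -> ideal_gen G p`_k.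
  by move=> k; apply: (Hm (size p)); rewrite leq_addl.
elim: m k => [|m IHm] k; first by rewrite addn0 => /(nth_default 0) ->; exact: idealg0.
rewrite -addSnnS => /IHm Hk1; rewrite -(addrK (g * p`_k.+1) p`_k).
by apply: idealgB => //; apply: idealgM.
Qed.

Section RegularSequenceSubmodules.
Variables GI GJ : S -> Prop.
Local Notation I := (ideal_gen GI).
Local Notation J := (ideal_gen GJ).

Lemma sub_fM_nilP u : sub_fM I J [::] u <-> J u.
Proof.
split; last by move=> Ju; apply: idealg_gen; left.
by apply: idealg_sub => g [// | [f [v []]]].
Qed.

Lemma sub_fM_1P f u : sub_fM I J [:: f] u <-> exists j c, [/\ J j, I c & u = j + f * c].
Proof.
split; last first.
  move=> [j [c [Jj Ic ->]]]; apply: idealgD; apply: idealg_gen; first by left.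
  by right; exists f, c; rewrite mem_head.
move: u; apply: idealg_ind.
- by exists 0, 0; rewrite mulr0 addr0; split => //; exact: idealg0.
- move=> x y [j [c [Jj Ic ->]]] [j' [c' [Jj' Ic' ->]]]; exists (j + j'), (c + c').
  by split; [exact: idealgD | exact: idealgD | rewrite mulrDr addrACA].
- move=> a x [j [c [Jj Ic ->]]]; exists (a * j), (a * c).
  by split; [exact: idealgM | exact: idealgM | rewrite mulrDr mulrCA].
- move=> g [Jg | [f' [v [/[!inE] /eqP -> [Iv ->]]]]].
    by exists g, 0; rewrite mulr0 addr0; split => //; exact: idealg0.
  by exists 0, v; rewrite add0r; split => //; exact: idealg0.
Qed.

End RegularSequenceSubmodules.
End IdealGeneration.

Section Polynomials.
Variable K : fieldType.

Fixpoint collapse (n : nat) : {rmorphism mpoly K n -> {poly K}} :=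
  match n return {rmorphism mpoly K n -> {poly K}} with
  | 0 => GRing.RMorphism.clone _ _ (@polyC K) _
  | n'.+1 => GRing.RMorphism.clone _ _
      (horner_morph (fun x : mpoly K n' => mulrC ('X : {poly K}) (collapse n' x))) _
  end.

Lemma collapse_var n (i : 'I_n) : collapse n (var K i) = 'X.
Proof.
elim: n i => [|n IH] [[|i] Hi] //=; rewrite /var /=; first by rewrite horner_morphX.
by rewrite horner_morphC (IH (Ordinal (Hi : (i < n)%N))).
Qed.

Lemma collapse_idealg n (d : {poly K}) (G : mpoly K n -> Prop) x :
  (forall g, G g -> d %| collapse n g) -> ideal_gen G x -> d %| collapse n x.
Proof.
move=> HG; move: x; apply: idealg_ind => //.
- by rewrite rmorph0 dvdp0.
- by move=> y z Hy Hz; rewrite rmorphD dvdp_add.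
- by move=> a y Hy; rewrite rmorphM dvdp_mull.
Qed.

Lemma collapse_max_ideal n x : @max_ideal K n x -> 'X %| collapse n x.
Proof. by apply: collapse_idealg => g [i ->]; rewrite collapse_var dvdpp. Qed.

Lemma collapse_var_ideal n (V : {set 'I_n}) x : @var_ideal K n V x -> 'X %| collapse n x.
Proof. by apply: collapse_idealg => g [i [_ ->]]; rewrite collapse_var dvdpp. Qed.

Lemma collapse_sqfree_ideal n (F : {set {set 'I_n}}) x :
  (forall A, A \in F -> (2 <= #|A|)%N) -> @sqfree_ideal K n F x -> 'X^2 %| collapse n x.
Proof.
move=> HF; apply: collapse_idealg => g [A [HA ->]].
rewrite /sqmon rmorph_prod (eq_bigr (fun _ => 'X)) => [|i _]; last exact: collapse_var.
by rewrite prodr_const dvdp_exp2l // HF.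
Qed.

(* The obstruction to depth: no variable x_i lies in J + m I, where m is the
   maximal ideal, since collapsing maps J + m I into X^2 K[X]. *)
Lemma var_notin_J_mI n (V : {set 'I_n}) (F : {set {set 'I_n}}) (i : 'I_n) j h c :
  (forall A, A \in F -> (2 <= #|A|)%N) ->
  @sqfree_ideal K n F j -> @max_ideal K n h -> @var_ideal K n V c ->
  var K i <> j + h * c.
Proof.
move=> HF Jj mh Ic /(congr1 (collapse n)); rewrite rmorphD rmorphM collapse_var => EX.
have : 'X^2 %| ('X : {poly K}).
  rewrite {2}EX dvdp_add //; first exact: collapse_sqfree_ideal Jj.
  rewrite expr2; apply: dvdp_mul; [exact: collapse_max_ideal | exact: collapse_var_ideal Ic].
by rewrite -{2}(expr1 'X) dvdp_Pexp2l // size_polyX.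
Qed.

Definition shift n (B : {set 'I_n}) : {set 'I_n.+1} := [set lift ord0 i | i in B].

Definition del0 n (F : {set {set 'I_n.+1}}) : {set {set 'I_n}} := [set B | shift B \in F].
Definition link0 n (F : {set {set 'I_n.+1}}) : {set {set 'I_n}} :=
  [set B | ord0 |: shift B \in F].

Lemma card_shift n (B : {set 'I_n}) : #|shift B| = #|B|.
Proof. by rewrite card_imset //; exact: lift_inj. Qed.

Lemma ord0_notin_shift n (B : {set 'I_n}) : ord0 \notin shift B.
Proof. by apply/imsetP => -[i _ E]; have := neq_lift ord0 i; rewrite -E eqxx. Qed.

Lemma sqmon_shift n (B : {set 'I_n}) :
  (sqmon K (shift B) : {poly mpoly K n}) = (sqmon K B)%:P.
Proof.
rewrite /sqmon big_imset => [|i j _ _]; last exact: lift_inj.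
by rewrite rmorph_prod; apply: eq_bigr => i _; rewrite /var lift0.
Qed.

Lemma sqmon_ord0_shift n (B : {set 'I_n}) :
  (sqmon K (ord0 |: shift B) : {poly mpoly K n}) = 'X * (sqmon K B)%:P.
Proof. by rewrite /sqmon big_setU1 ?ord0_notin_shift //= -sqmon_shift. Qed.

Lemma shift_decomp n (B : {set 'I_n.+1}) :
  let B' := [set i | lift ord0 i \in B] in
  B = if ord0 \in B then ord0 |: shift B' else shift B'.
Proof.
move=> B'; have inB j : j != ord0 -> (j \in B) = (j \in shift B').
  case: (unliftP ord0 j) => [i -> _ | ->]; last by rewrite eqxx.
  by rewrite mem_imset ?inE //; exact: lift_inj.
case: ifP => B0; apply/setP => j; rewrite ?inE.
  by case: (eqVneq j ord0) => [-> | /inB] //=; rewrite B0.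
case: (eqVneq j ord0) => [-> | /inB //]; by rewrite B0 (negbTE (ord0_notin_shift _)).
Qed.

Lemma sqfree_ideal_gen n (F : {set {set 'I_n}}) A :
  A \in F -> @sqfree_ideal K n F (sqmon K A).
Proof. by move=> HA; apply: idealg_gen; exists A. Qed.

Lemma sqfree_ideal_coef n (F : {set {set 'I_n.+1}}) (q : {poly mpoly K n}) :
  @sqfree_ideal K n.+1 F q ->
  @sqfree_ideal K n (del0 F) q`_0 /\ forall k, @sqfree_ideal K n (del0 F :|: link0 F) q`_k.
Proof.
pose P (q : mpoly K n.+1) := @sqfree_ideal K n (del0 F) (q : {poly mpoly K n})`_0 /\
  forall k, @sqfree_ideal K n (del0 F :|: link0 F) (q : {poly mpoly K n})`_k.
move=> Fq; change (P q); move: q Fq; apply: idealg_ind; rewrite /P.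
- by split=> [|k]; rewrite coef0; exact: idealg0.
- move=> x y [Hx0 Hx] [Hy0 Hy]; split=> [|k]; rewrite coefD; first exact: idealgD.
  exact: idealgD (Hx k) (Hy k).
- move=> a x [Hx0 Hx]; split=> [|k]; rewrite coefM; first by rewrite big_ord1; exact: idealgM.
  by apply: idealg_sum => i _; exact: idealgM (Hx _).
move=> _ [A [HA ->]]; move: HA; rewrite [A]shift_decomp.
set B := [set i | _]; case: ifP => _ HB.
  rewrite sqmon_ord0_shift; split=> [|k]; rewrite coefXM /=; first exact: idealg0.
  case: ifP => _; first exact: idealg0.
  by rewrite coefC; case: ifP => _; [apply: sqfree_ideal_gen; rewrite !inE HB orbT | exact: idealg0].
rewrite sqmon_shift; split=> [|k]; rewrite coefC /=; first by apply: sqfree_ideal_gen; rewrite inE.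
by case: ifP => _; [apply: sqfree_ideal_gen; rewrite !inE HB | exact: idealg0].
Qed.

Lemma sqfree_ideal_mulC n (F : {set {set 'I_n.+1}}) (G : {set {set 'I_n}})
    (m : {poly mpoly K n}) x :
  (forall B, B \in G -> @sqfree_ideal K n.+1 F (m * (sqmon K B)%:P)) ->
  @sqfree_ideal K n G x -> @sqfree_ideal K n.+1 F (m * x%:P).
Proof.
pose P (x : mpoly K n) := @sqfree_ideal K n.+1 F (m * x%:P).
move=> HG Gx; change (P x); move: x Gx; apply: idealg_ind; rewrite /P.
- by rewrite mulr0; exact: idealg0.
- by move=> x y Hx Hy; rewrite polyCD mulrDr; exact: idealgD.
- by move=> a x Hx; rewrite polyCM mulrCA; exact: idealgM.
- by move=> _ [B [HB ->]]; exact: HG.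
Qed.

Lemma coef_sqfree_ideal n (F : {set {set 'I_n.+1}}) (p : {poly mpoly K n}) :
  @sqfree_ideal K n (del0 F) p`_0 ->
  (forall k, (0 < k)%N -> @sqfree_ideal K n (del0 F :|: link0 F) p`_k) ->
  @sqfree_ideal K n.+1 F p.
Proof.
move=> Hp0 Hp; rewrite -[p]coefK poly_def; apply: idealg_sum => -[[|k] _] _ /=.
  rewrite expr0 -mul_polyC mulr1 -[_%:P]mul1r; apply: sqfree_ideal_mulC Hp0 => B.
  by rewrite inE mul1r -sqmon_shift; exact: sqfree_ideal_gen.
rewrite -mul_polyC mulrC; apply: sqfree_ideal_mulC (Hp k.+1 isT) => B.
rewrite !inE => /orP [HB | HB]; first by rewrite -sqmon_shift; exact/idealgM/sqfree_ideal_gen.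
by rewrite exprSr -mulrA -sqmon_ord0_shift; exact/idealgM/sqfree_ideal_gen.
Qed.

Definition sum_vars n : mpoly K n := \sum_(i < n) var K i.

Lemma sum_vars_max_ideal n : @max_ideal K n (sum_vars n).
Proof. by apply: idealg_sum => i _; apply: idealg_gen; exists i. Qed.

Lemma sum_varsS n : (sum_vars n.+1 : {poly mpoly K n}) = 'X + (sum_vars n)%:P.
Proof. by rewrite /sum_vars big_ord_recl rmorph_sum. Qed.

Lemma sum_vars_regular n (F G : {set {set 'I_n}}) (p : mpoly K n) :
  (forall B, B \in F -> (2 <= #|B|)%N) -> (forall B, B \in G -> (0 < #|B|)%N) ->
  @sqfree_ideal K n F (sum_vars n * p) -> @sqfree_ideal K n G p ->
  @sqfree_ideal K n F p.
Proof.
elim: n F G p => [|n IH] F G p HF HG Fgp Gp.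
  suff -> : p = 0 by exact: idealg0.
  clear Fgp; move: p Gp; apply: idealg_ind => //.
  - by move=> x y -> ->; rewrite addr0.
  - by move=> a x ->; rewrite mulr0.
  - move=> g [B [HB _]]; move: (HG B HB) (max_card B).
    by rewrite card_ord leqn0 => /[swap] /eqP ->.
have [Fgp0 Fgp_coef] := sqfree_ideal_coef Fgp.
have gpE k : (sum_vars n.+1 * p : {poly mpoly K n})`_k =
    (if k == 0%N then 0 else p`_k.-1) + sum_vars n * p`_k.
  by rewrite sum_varsS mulrDl coefD coefXM coefCM.
have Fp_coef : forall k, @sqfree_ideal K n (del0 F :|: link0 F) p`_k.
  by apply: (idealg_coef_descent (g := sum_vars n)) => k; have := Fgp_coef k.+1; rewrite gpE.
apply: coef_sqfree_ideal => [|k _]; last exact: Fp_coef.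
apply: (IH _ (del0 F :|: link0 F)) => //.
- by move=> B; rewrite inE -card_shift => /HF.
- move=> B; rewrite !inE => /orP [/HF | /HF]; first by rewrite card_shift; exact: ltnW.
  by rewrite cardsU1 ord0_notin_shift card_shift.
- by move: Fgp0; rewrite gpE add0r.
Qed.

Definition cut n (J : mpoly K n -> Prop) (C : {set 'I_n}) :=
  forall w b, w \in C -> b \notin C -> J (sqmon K [set w; b]).

Lemma sqmon2 n (w b : 'I_n) : w != b -> sqmon K [set w; b] = var K w * var K b.
Proof. by move=> wb; rewrite /sqmon big_setU1 ?inE //= big_set1. Qed.

Lemma max_ideal_split n (C : {set 'I_n}) f : @max_ideal K n f ->
  exists a, @var_ideal K n C a /\ @var_ideal K n (~: C) (f - a).
Proof.
move: f; apply: idealg_ind.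
- by exists 0; rewrite subr0; split; exact: idealg0.
- move=> x y [a [Ca Na]] [b [Cb Nb]]; exists (a + b).
  by rewrite opprD addrACA; split; exact: idealgD.
- move=> c x [a [Ca Na]]; exists (c * a).
  by rewrite -mulrBr; split; exact: idealgM.
move=> _ [i ->]; have [iC | iNC] := boolP (i \in C).
  by exists (var K i); rewrite subrr; split; [apply: idealg_gen; exists i | exact: idealg0].
by exists 0; rewrite subr0; split; [exact: idealg0 | apply: idealg_gen; exists i; rewrite inE].
Qed.

Lemma cut_mul n (F : {set {set 'I_n}}) (C : {set 'I_n}) x y :
  cut (@sqfree_ideal K n F) C ->
  @var_ideal K n C x -> @var_ideal K n (~: C) y -> @sqfree_ideal K n F (x * y).
Proof.
move=> Ccut Cx Ny; move: x Cx; apply: idealg_ind.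
- by rewrite mul0r; exact: idealg0.
- by move=> u v Hu Hv; rewrite mulrDl; exact: idealgD.
- by move=> a u Hu; rewrite -mulrA; exact: idealgM.
move=> _ [w [wC ->]]; move: y Ny; apply: idealg_ind.
- by rewrite mulr0; exact: idealg0.
- by move=> u v Hu Hv; rewrite mulrDr; exact: idealgD.
- by move=> a u Hu; rewrite mulrCA; exact: idealgM.
move=> _ [b [/[!inE] bNC ->]]; rewrite -sqmon2; first exact: Ccut.
by apply: contraNneq bNC => <-.
Qed.

(* Depth < 2 in presence of a cut C: for a regular sequence f1, f2 write
   f_k = a_k + (f_k - a_k) along C.  Then f2 a1 = f1 a2 mod J, so a1 = j + f1 c
   by regularity of f2; for w in C, f1 (x_w c - x_w) lies in J, so
   x_w c - x_w lies in J by regularity of f1, and x_w is in J + x_w I. *)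
Lemma cut_depth_lt2 n (V C : {set 'I_n}) (F : {set {set 'I_n}}) :
  (forall A, A \in F -> (2 <= #|A|)%N) -> C \subset V -> C != set0 ->
  cut (@sqfree_ideal K n F) C ->
  ~ depth_ge (@var_ideal K n V) (@sqfree_ideal K n F) 2.
Proof.
move=> HF CV /set0Pn [w wC] Ccut [[|f1 [|f2 [|? ?]]] [//= _ [Hmax Hreg _]]].
have IC x : @var_ideal K n C x -> @var_ideal K n V x.
  by apply: idealg_sub => _ [i [iC ->]]; apply: idealg_gen; exists i; rewrite (subsetP CV).
have Cw : @var_ideal K n C (var K w) by apply: idealg_gen; exists w.
have [a1 [Ca1 Na1]] := max_ideal_split C (Hmax f1 (mem_head _ _)).
have [a2 [Ca2 Na2]] := max_ideal_split C (Hmax f2 (mem_last f1 [:: f2])).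
have f2a1 : sub_fM (var_ideal V) (sqfree_ideal F) [:: f1] (f2 * a1).
  apply/sub_fM_1P; exists (a1 * (f2 - a2) - a2 * (f1 - a1)), a2.
  split; [exact: idealgB (cut_mul Ccut Ca1 Na2) (cut_mul Ccut Ca2 Na1) | exact: IC | ring].
have [j [c [Jj Ic a1E]]] := (sub_fM_1P _ _ _ _).1 (Hreg 1%N isT a1 (IC _ Ca1) f2a1).
have /sub_fM_nilP Jwc :
    sub_fM (var_ideal V) (sqfree_ideal F) [::] (var K w * c - var K w).
  apply: (Hreg 0%N isT).
    by apply: idealgB; [exact: idealgM | exact: IC].
  apply/sub_fM_nilP; have -> : f1 * (var K w * c - var K w) =
      - (var K w * j) - var K w * (f1 - a1) by rewrite a1E; ring.
  by apply: idealgB; [exact/idealgN/idealgM | exact: cut_mul Cw Na1].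
have mw : @max_ideal K n (var K w) by apply: idealg_gen; exists w.
by apply: (var_notin_J_mI HF (idealgN Jwc) mw Ic); ring.
Qed.

Lemma depth_ge1 n (V : {set 'I_n}) (F : {set {set 'I_n}}) :
  (forall A, A \in F -> (2 <= #|A|)%N) -> V != set0 ->
  depth_ge (@var_ideal K n V) (@sqfree_ideal K n F) 1.
Proof.
move=> HF /set0Pn [v vV]; exists [:: sum_vars n]; split=> //; split.
- by move=> f /[!inE] /eqP ->; exact: sum_vars_max_ideal.
- move=> [|k] // _ u Iu /= /sub_fM_nilP Jgu; apply/sub_fM_nilP.
  apply: (sum_vars_regular (G := [set [set i] | i in V])) HF _ Jgu _.
    by move=> _ /imsetP [i _ ->]; rewrite cards1.
  move: Iu; apply: idealg_sub => _ [i [iV ->]].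
  have -> : var K i = sqmon K [set i] by rewrite /sqmon big_set1.
  by apply: sqfree_ideal_gen; exact: imset_f.
exists (var K v); split; first by apply: idealg_gen; exists v.
by move=> /sub_fM_1P [j [c [Jj Ic]]]; exact: var_notin_J_mI HF Jj (sum_vars_max_ideal n) Ic.
Qed.

Lemma pbP (P : Prop) : reflect P (pb P).
Proof. by rewrite /pb; case: excluded_middle_informative => HP; constructor. Qed.

Definition missing_edges n (J : mpoly K n -> Prop) (W : {set 'I_n}) :=
  [set A : {set 'I_n} | [&& #|A| == 2, [exists w in W, w \in A] & ~~ pb (J (sqmon K A))]].

(* Without cuts inside V, every W included in V meets at least #|W| missing
   edges: removing from W an endpoint w of a missing edge {w, b} leaving W
   loses that edge. *)
Lemma card_missing_edges n (V : {set 'I_n}) (J : mpoly K n -> Prop) :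
  (forall C : {set 'I_n}, C \subset V -> C != set0 -> ~ cut J C) ->
  forall W : {set 'I_n}, W \subset V -> (#|W| <= #|missing_edges J W|)%N.
Proof.
move=> nocut W; move Hm : #|W| => m; elim: m W Hm => [|m IH] W Hm WV //.
have W0 : W != set0 by apply: contra_eqN Hm => /eqP ->; rewrite cards0.
have [w [b [wW bNW Nwb]]] : exists w b, [/\ w \in W, b \notin W & ~ J (sqmon K [set w; b])].
  apply: NNPP => Hn; apply: (nocut W WV W0) => w b wW bNW; apply: NNPP => Nwb.
  by apply: Hn; exists w, b.
have wb : w != b by apply: contraNneq bNW => <-.
have /IH IHw : #|W :\ w| = m by move: Hm; rewrite (cardsD1 w W) wW add1n => -[].
apply: leq_ltn_trans (IHw (subset_trans (subD1set W w) WV)) _.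
apply: proper_card; apply/properP; split.
  apply/subsetP => A /[!inE] /and3P [-> /existsP [x /andP [/[!inE] /andP [_ xW] xA]] ->].
  by rewrite andbT; apply/existsP; exists x; rewrite xW.
exists [set w; b].
  rewrite inE cards2 wb /=; apply/andP; split; last by apply/negP => /pbP.
  by apply/existsP; exists w; rewrite wW !inE eqxx.
rewrite inE negb_and orbC negb_and; apply/orP; left; apply/orP; left.
rewrite negb_exists; apply/forallP => x; rewrite !inE.
apply/negP => /andP [/andP [xw xW] /orP [] /eqP xE]; first by rewrite xE eqxx in xw.
by move: bNW; rewrite -xE xW.
Qed.

(* If s = rho_2(I) - rho_2(J) < #|V| then J has a cut inside V: otherwise
   the missing edges meeting V, all in I but not in J, would number >= #|V|. *)
Lemma cut_of_small_s n (V : {set 'I_n}) (F : {set {set 'I_n}}) :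
  (forall f, @sqfree_ideal K n F f -> @var_ideal K n V f) ->
  (rho 2 (@var_ideal K n V) - rho 2 (@sqfree_ideal K n F) < #|V|)%N ->
  exists C : {set 'I_n}, [/\ C \subset V, C != set0 & cut (@sqfree_ideal K n F) C].
Proof.
move=> JI small; apply: NNPP => nocut.
have le_V : (#|V| <= #|missing_edges (@sqfree_ideal K n F) V|)%N.
  by apply: card_missing_edges (subxx V) => C CV C0 Ccut; apply: nocut; exists C.
rewrite /rho in small; set SI := [set A | _ & _] in small; set SJ := [set A | _ & _] in small.
have sJI : SJ \subset SI.
  by apply/subsetP => A /[!inE] /andP [-> /pbP /JI /pbP].
have /subset_leq_card : missing_edges (sqfree_ideal F) V \subset SI :\: SJ.
  apply/subsetP => A /[!inE] /and3P [-> /existsP [w /andP [wV wA]] ->] /=.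
  apply/pbP; rewrite /sqmon (big_setD1 w wA) /= mulrC.
  by apply: idealgM; apply: idealg_gen; exists w.
rewrite cardsD (setIidPr sJI) => /(leq_trans le_V).
by rewrite leqNgt small.
Qed.

End Polynomials.

Theorem proposition1p14 (K : fieldType) (n r : nat)
    (V : {set 'I_n}) (F : {set {set 'I_n}}) :
  let I := @var_ideal K n V in
  let J := @sqfree_ideal K n F in
  #|V| = r -> (0 < r)%N ->
  F != set0 -> (forall A, A \in F -> (2 <= #|A|)%N) ->
  (forall f, J f -> I f) -> (exists f, I f /\ ~ J f) ->
  let s := (rho 2 I - rho 2 J)%N in
  (s < r)%N ->
  depth_eq I J 1.
Proof.
move=> I J cardV r_gt0 _ HF JI _ s; rewrite -cardV => s_lt_r.
have V0 : V != set0 by rewrite -card_gt0 cardV.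
have [C [CV C0 Ccut]] := cut_of_small_s JI s_lt_r.
split; first exact: depth_ge1.
exact: cut_depth_lt2 HF CV C0 Ccut.
Qed.
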